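(* Assume $f$ has a unique global maximizer $g$ and the problem contains no weak epistasis. For every $S\subseteq V$ and every assignment $R$ with $\mathcal C(R)=V\setminus\big(S\cup\mathcal{IN}(S)\cup\mathcal{IN}^2(S)\big)$, we have $g[s]\in\Psi_{\{(\mathcal{IN}(S)\setminus S,\,g)\}\cup R}[s]$ for all $s\in S$.
   Context: Fix $\ell\ge1$, loci $V=\{0,\dots,\ell-1\}$, chromosomes $\vec y\in\{0,1\}^V$, fitness $f:\{0,1\}^V\to\mathbb R$ (maximized) with unique global maximizer $g$. An assignment $A$ is a set of pairs $(v,a)$ ($v\in V$, $a\in\{0,1\}$) with at most one pair per locus; $A[v]=a$ if $(v,a)\in A$, else $A[v]=*$; coverage $\mathcal C(A)=\{v:A[v]\ne*\}$; for $T\subseteq V$, $\{(T,g)\}=\{(t,g[t]):t\in T\}$. $\Psi_A$ (constrained optima) is the set of chromosomes agreeing with $A$ on $\mathcal C(A)$ with maximum fitness among such chromosomes; $\Psi_A[v]=\{\psi_v:\psi\in\Psi_A\}$. Epistasis: for $v\in V$ and nonempty $S\subseteq V\setminus\{v\}$, $S\Rightarrow v$ iff for every $s\in S$ there exists an assignment $A$ with $\mathcal C(A)=S$ and $\Psi_A[v]\neq\Psi_{A\setminus\{(s,A[s])\}}[v]$; the empty set is never epistatic. An epistasis $S\Rightarrow v$ with $|S|\ge2$ is weak if no nonempty proper subset $T\subsetneq S$ has $T\Rightarrow v$; ''no weak epistasis'' means no epistasis is weak. $\mathcal{IN}(v)=\{u:\{u\}\Rightarrow v\}$, $\mathcal{IN}^2(v)=\{u:\exists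 w\in\mathcal{IN}(v),\ \{u\}\Rightarrow w\}$, and for $S\subseteq V$, $\mathcal{IN}(S)=\bigcup_{v\in S}\mathcal{IN}(v)$, $\mathcal{IN}^2(S)=\bigcup_{v\in S}\mathcal{IN}^2(v)$. *)

From mathcomp Require Import all_boot all_order all_algebra.
From mathcomp Require Import boolp.
Set Implicit Arguments. Unset Strict Implicit. Unset Printing Implicit Defensive.
Import Order.TTheory GRing.Theory Num.Theory.
Local Open Scope ring_scope.

Section Epistasis.
Variable l : nat.
(* loci V = 'I_l ; chromosomes are functions V -> {0,1} (bool) *)
Definition chrom := {ffun 'I_l -> bool}.
(* assignment: at most one value per locus; None = '*' *)
Definition assignment := {ffun 'I_l -> option bool}.

Definition coverage (A : assignment) : {set 'I_l} := [set v | A v != None].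

Definition agrees (A : assignment) (y : chrom) : bool :=
  [forall v, if A v is Some a then y v == a else true].

Variable R : realDomainType.
Variable f : chrom -> R.

Definition Psi (A : assignment) : {set chrom} :=
  [set y | agrees A y && [forall z, agrees A z ==> (f z <= f y)]].

Definition Psi_at (A : assignment) (v : 'I_l) : {set bool} :=
  [set (y : chrom) v | y in Psi A].

Definition remove_locus (A : assignment) (s : 'I_l) : assignment :=
  [ffun v => if v == s then None else A v].

Definition epistatic (S : {set 'I_l}) (v : 'I_l) : Prop :=
  S != set0 /\ v \notin S /\
  forall s, s \in S -> exists A : assignment,
     coverage A = S /\ Psi_at A v != Psi_at (remove_locus A s) v.

Definition weak_epistasis (S : {set 'I_l}) (v : 'I_l) : Prop :=
  epistatic S v /\ (2 <= #|S|)%N /\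
  forall T : {set 'I_l}, T \proper S -> T != set0 -> ~ epistatic T v.

Definition no_weak_epistasis : Prop :=
  forall S v, ~ weak_epistasis S v.

Definition IN (v : 'I_l) : {set 'I_l} :=
  [set u | `[< epistatic [set u] v >]].

Definition IN2 (v : 'I_l) : {set 'I_l} :=
  [set u | [exists w, (w \in IN v) && `[< epistatic [set u] w >]]].

Definition IN_set (S : {set 'I_l}) : {set 'I_l} := \bigcup_(v in S) IN v.
Definition IN2_set (S : {set 'I_l}) : {set 'I_l} := \bigcup_(v in S) IN2 v.

Definition assign_of (T : {set 'I_l}) (g : chrom) : assignment :=
  [ffun t => if t \in T then Some (g t) else None].

(* union of two assignments (used only for assignments with disjoint coverage) *)
Definition assign_union (A B : assignment) : assignment :=
  [ffun v => if A v is Some a then Some a else B v].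

Definition unique_global_max (g : chrom) : Prop :=
  forall y : chrom, y != g -> f y < f g.

End Epistasis.

From mathcomp Require Import all_boot all_order all_algebra.
From mathcomp Require Import boolp.
Set Implicit Arguments. Unset Strict Implicit. Unset Printing Implicit Defensive.
Import Order.TTheory GRing.Theory Num.Theory.
Local Open Scope ring_scope.

(* Without weak epistasis, every epistasis S => v contains a singleton epistasis
   {u} => v, so a set of loci containing no IN(v) is not epistatic to v and its
   loci can be freed one at a time without changing Psi[v].  Hence if the
   assignment covers neither v nor IN(v), then Psi[v] equals the unconstrained
   Psi_{}[v] = {g[v]}.  An optimum y of R therefore agrees with g on
   S and IN(S), because R avoids IN(S) and IN^2(S) as well; and it stays
   optimal once the loci of IN(S) \ S are fixed to g. *)

Section ConstrainedOptima.
Variables (l : nat) (R : realDomainType) (f : chrom l -> R).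

Definition empty_assignment : assignment l := [ffun => None].

Lemma coverage_remove_locus (A : assignment l) s :
  coverage (remove_locus A s) = coverage A :\ s.
Proof. by apply/setP=> u; rewrite !inE ffunE; case: (u == s). Qed.

Lemma coverage_eq0 (A : assignment l) :
  coverage A = set0 -> A = empty_assignment.
Proof.
move=> /setP cov0; apply/ffunP=> u; rewrite ffunE.
by move: (cov0 u); rewrite !inE; case: (A u).
Qed.

Lemma coverage_assign_of (T : {set 'I_l}) (g : chrom l) :
  coverage (assign_of T g) = T.
Proof. by apply/setP=> u; rewrite !inE ffunE; case: (u \in T). Qed.

Lemma agrees_assign_of (T : {set 'I_l}) (g y : chrom l) :
  {in T, y =1 g} -> agrees (assign_of T g) y.
Proof.
move=> yg; apply/forallP=> u; rewrite ffunE.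
by case: ifP => // uT; rewrite yg.
Qed.

Lemma Psi_exists (A : assignment l) : exists y, y \in Psi f A.
Proof.
pose P := [pred z : chrom l | agrees A z].
pose z0 : chrom l := [ffun u => odflt false (A u)].
have Pz0 : P z0 by apply/forallP=> u; rewrite ffunE; case: (A u).
exists [arg max_(y > z0 | P y) f y]%O; case: arg_maxP => //= y Py ymax.
by rewrite inE Py; apply/forallP=> z; apply/implyP=> Pz; apply: ymax.
Qed.

Lemma Psi_empty_assignment (g : chrom l) :
  unique_global_max f g -> Psi f empty_assignment = [set g].
Proof.
have agrees0 z : agrees empty_assignment z by apply/forallP=> u; rewrite ffunE.
move=> gmax; apply/setP=> y; rewrite !inE agrees0 /=.
apply/forallP/eqP=> [ymax | -> z]; last first.
  by rewrite agrees0 /=; have [-> //|zg] := eqVneq z g; rewrite ltW ?gmax.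
apply: contraTeq (ymax g) => yg.
by rewrite agrees0 /= -ltNge gmax.
Qed.

Lemma Psi_assign_union (A B : assignment l) y :
  [disjoint coverage A & coverage B] -> y \in Psi f B -> agrees A y ->
  y \in Psi f (assign_union A B).
Proof.
move=> AB; rewrite !inE => /andP [yB /forallP ymax] yA.
apply/andP; split.
  apply/forallP=> v; rewrite ffunE.
  by case: (A v) (forallP yA v) => [a //|_]; apply: (forallP yB).
apply/forallP=> z; apply/implyP=> zAB; apply: (implyP (ymax z)).
apply/forallP=> v; move: (forallP zAB v); rewrite ffunE.
case Av: (A v) => [a|//] _; case Bv: (B v) => //.
have : v \in coverage A :&: coverage B by rewrite !inE Av Bv.
by rewrite (disjoint_setI0 AB) inE.
Qed.

Section NoWeakEpistasis.
Hypothesis no_weak : no_weak_epistasis f.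

Lemma epistatic_singleton C v :
  epistatic f C v -> exists2 u, u \in C & epistatic f [set u] v.
Proof.
move=> eCv.
have [T /minsetP [/asboolP eTv minT] sTC] :=
  @minset_exists _ (fun T => `[< epistatic f T v >]) C (asboolT eCv).
have [/eqP/cards1P [u defT] | T_not1] := eqVneq #|T| 1%N.
  by exists u; [apply: (subsetP sTC); rewrite defT set11 | rewrite -defT].
exfalso; apply: (@no_weak T v); split=> //; split.
  by case: eTv; rewrite -card_gt0; case: #|T| T_not1 => [|[|]].
move=> U ltUT _ eUv.
by move: (ltUT); rewrite {1}(minT U (asboolT eUv) (proper_sub ltUT)) properxx.
Qed.

Lemma not_epistatic_remove_locus (B : assignment l) v :
  coverage B != set0 -> v \notin coverage B -> ~ epistatic f (coverage B) v ->
  exists2 s, s \in coverage B & Psi_at f B v = Psi_at f (remove_locus B s) v.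
Proof.
move=> B0 vB neB; apply: contrapT => no_s; apply: neB; do 2!split=> //.
move=> s sB; apply: contrapT => no_A; apply: no_s; exists s => //.
by apply: contrapT => neqB; apply: no_A; exists B; split=> //; apply/eqP.
Qed.

Lemma Psi_at_outside_IN (g : chrom l) (B : assignment l) v :
  unique_global_max f g -> v \notin coverage B ->
  {in coverage B, forall u, u \notin IN f v} -> Psi_at f B v = [set g v].
Proof.
move=> gmax; elim: {B}_.+1 {-2}B (ltnSn #|coverage B|) => // n IH B ltBn vB BIN.
have [/eqP/coverage_eq0 -> | B0] := boolP (coverage B == set0).
  by rewrite /Psi_at (Psi_empty_assignment gmax) imset_set1.
have [|s sB ->] := not_epistatic_remove_locus B0 vB.
  move=> /epistatic_singleton [u uB euv].
  by move: (BIN u uB); rewrite inE asboolT.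
have sub_B : {subset coverage (remove_locus B s) <= coverage B}.
  by move=> u; rewrite coverage_remove_locus => /setD1P [].
apply: IH => [|| u /sub_B]; last exact: BIN.
  by move: ltBn; rewrite coverage_remove_locus (cardsD1 s (coverage B)) sB.
by apply: contra vB => /sub_B.
Qed.

End NoWeakEpistasis.

Lemma IN_sub_IN_IN2_set (S : {set 'I_l}) v :
  v \in S :|: IN_set f S -> IN f v \subset IN_set f S :|: IN2_set f S.
Proof.
move=> vS; apply/subsetP=> u uv; rewrite inE.
case/setUP: vS => [vS | /bigcupP [w wS vw]].
  by apply/orP; left; apply/bigcupP; exists v.
by apply/orP; right; apply/bigcupP; exists w => //; rewrite inE;
  apply/existsP; exists v; rewrite vw; move: uv; rewrite inE.
Qed.

End ConstrainedOptima.

Theorem theorem4 (l : nat) (R : realDomainType) (f : chrom l -> R) (g : chrom l) :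
  (1 <= l)%N ->
  unique_global_max f g ->
  no_weak_epistasis f ->
  forall (S : {set 'I_l}) (Rs : assignment l),
    coverage Rs = ~: (S :|: IN_set f S :|: IN2_set f S) ->
    forall s, s \in S ->
      g s \in Psi_at f (assign_union (assign_of (IN_set f S :\: S) g) Rs) s.
Proof.
move=> _ gmax no_weak S Rs covRs s sS.
have [y yRs] := Psi_exists f Rs.
have yg : {in S :|: IN_set f S, y =1 g}.
  move=> v vS; have vRs : v \notin coverage Rs by rewrite covRs in_setC negbK in_setU vS.
  have RsIN : {in coverage Rs, forall u, u \notin IN f v}.
    move=> u; rewrite covRs in_setC !in_setU -orbA negb_or => /andP [_ uS].
    by apply: contra uS => uv; rewrite -in_setU (subsetP (IN_sub_IN_IN2_set vS)).
  apply/set1P; rewrite -(Psi_at_outside_IN no_weak gmax vRs RsIN).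
  exact: imset_f.
apply/imsetP; exists y; last by rewrite yg // inE sS.
apply: Psi_assign_union => //.
  rewrite coverage_assign_of covRs disjoints_subset setCK.
  by apply/subsetP=> u /setDP [uIN _]; rewrite !in_setU uIN orbT.
by apply: agrees_assign_of => v /setDP [vIN _]; apply: yg; rewrite inE vIN orbT.
Qed.
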